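(* If there is a polynomial-time algorithm solving the $(\alpha_S,\alpha_D)$-shortcut approximation problem, then there is a polynomial-time algorithm solving the $(\alpha_S+1,\alpha_D)$-TC-spanner approximation problem.
   Context: Graphs: $G=(V,E)$ is a directed unweighted graph; distances count edges; the diameter of a graph is the maximum distance over all reachable ordered pairs. The transitive closure of $G$ is $G^T=(V,E^T)$ with $(u,v)\in E^T$ iff $u$ can reach $v$ in $G$. TC spanner: a set $E'\subseteq E^T$ such that $(V,E')$ has the same transitive closure as $G$; it is an $(s,d)$-TC spanner if $|E'|\le s$ and $(V,E')$ has diameter at most $d$. Shortcut: a set $E'\subseteq E^T\setminus E$; it is an $(s,d)$-shortcut if $|E'|\le s$ and $(V,E\cup E')$ has diameter at most $d$. The $(\alpha_S,\alpha_D)$-shortcut approximation problem: given a directed graph $G$ and integers $d,s$ such that $G$ admits an $(s,d)$-shortcut, find an $(\alpha_S s,\alpha_D d)$-shortcut of $G$. The $(\alpha_S,\alpha_D)$-TC-spanner approximation problem: given $G$ and integers $d,s$ such that $G$ admits an $(s,d)$-TC spanner, find an $(\alpha_S s,\alpha_D d)$-TC spanner of $G$. *)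

From HB Require Import structures.
From mathcomp Require Import all_boot all_order all_algebra.
From mathcomp Require Import reals.
Set Implicit Arguments. Unset Strict Implicit. Unset Printing Implicit Defensive.
Import Order.TTheory GRing.Theory Num.Theory.

Definition edges (n : nat) := {set 'I_n * 'I_n}.

Definition erel (n : nat) (E : edges n) : rel 'I_n := fun u v => (u, v) \in E.

Definition reach1 (n : nat) (E : edges n) (u v : 'I_n) : bool :=
  [exists w, erel E u w && connect (erel E) w v].

Definition tclosure (n : nat) (E : edges n) : edges n :=
  [set p | reach1 E p.1 p.2].

(* (V,F) has diameter at most r : every reachable ordered pair (u,v)
   (including u = v, at distance 0) is joined by a path with at most r
   edges. r is real so that approximation factors may be real. *)
Definition diam_le (R : realType) (n : nat) (F : edges n) (r : R) : Prop :=
  forall u v : 'I_n, connect (erel F) u v ->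
    exists p : seq 'I_n,
      [/\ path (erel F) u p, last u p = v & ((size p)%:R <= r)%R].

Definition is_tc_spanner (n : nat) (E E' : edges n) : Prop :=
  E' \subset tclosure E /\ tclosure E' = tclosure E.

Definition is_tcsp (R : realType) (n : nat) (E E' : edges n) (s d : R) : Prop :=
  [/\ is_tc_spanner E E', ((#|E'|)%:R <= s)%R & diam_le E' d].

Definition is_shortcut (n : nat) (E H : edges n) : Prop :=
  H \subset tclosure E :\: E.

Definition is_sc (R : realType) (n : nat) (E H : edges n) (s d : R) : Prop :=
  [/\ is_shortcut E H, ((#|H|)%:R <= s)%R & diam_le (E :|: H) d].

Record inst := Inst { inn : nat; inE : edges inn; ind : nat; ins : nat }.

Definition alg := forall I : inst, edges (inn I).

Definition solves_shortcut_approx (R : realType) (aS aD : nat -> R) (A : alg) :=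
  forall I : inst,
    (exists H : edges (inn I), is_sc (inE I) H ((ins I)%:R : R) ((ind I)%:R : R)) ->
    is_sc (inE I) (A I) (aS (inn I) * (ins I)%:R) (aD (inn I) * (ind I)%:R).

Definition solves_tcsp_approx (R : realType) (aS aD : nat -> R) (A : alg) :=
  forall I : inst,
    (exists E' : edges (inn I), is_tcsp (inE I) E' ((ins I)%:R : R) ((ind I)%:R : R)) ->
    is_tcsp (inE I) (A I) (aS (inn I) * (ins I)%:R) (aD (inn I) * (ind I)%:R).

(* We do not fix a machine model; instead the theorem is stated for    *)
(* EVERY class of algorithms satisfying the following closure          *)
(* properties, all of which hold for the class of polynomial-time      *)
(* computable functions (with the standard encoding of an instance:    *)
(* n, the edge list, and d, s in binary).                              *)

(* First-order formulas over a graph, with atoms for edges, for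
   reachability (transitive closure), the linear order on 'I_n and
   equality; variables are de Bruijn indices. *)
Inductive form :=
| FE of nat & nat
| FR of nat & nat
| FLt of nat & nat
| FEq of nat & nat
| FNot of form
| FAnd of form & form
| FEx of form.

Definition atom2 (n : nat) (r : rel 'I_n) (env : seq 'I_n) (i j : nat) : bool :=
  match onth env i, onth env j with
  | Some x, Some y => r x y
  | _, _ => false
  end.

Fixpoint feval (n : nat) (E : edges n) (env : seq 'I_n) (f : form) : bool :=
  match f with
  | FE i j => atom2 (erel E) env i j
  | FR i j => atom2 (reach1 E) env i j
  | FLt i j => atom2 (fun x y : 'I_n => (x < y)%N) env i j
  | FEq i j => atom2 (fun x y : 'I_n => x == y) env i j
  | FNot g => ~~ feval E env g
  | FAnd g h => feval E env g && feval E env h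
  | FEx g => [exists x : 'I_n, feval E (x :: env) g]
  end.

(* the edge set defined by a formula with two free variables (0 = tail, 1 = head) *)
Definition fo_alg (f : form) : alg :=
  fun I => [set p | feval (inE I) [:: p.1; p.2] f].

Definition poly_closed (Poly : alg -> Prop) : Prop :=
  [/\
      forall f : form, Poly (fo_alg f),
      forall A F : alg, Poly A -> Poly F ->
        Poly (fun I => A (Inst (F I) (ind I) (ins I)))
    &
      forall A B : alg, Poly A -> Poly B -> Poly (fun I => A I :|: B I)].

From Pilot Require Import Defs.
From HB Require Import structures.
From mathcomp Require Import all_boot all_order all_algebra zify.
From mathcomp Require Import reals.
Import Order.TTheory GRing.Theory Num.Theory.
Set Implicit Arguments. Unset Strict Implicit. Unset Printing Implicit Defensive.

(* Every transitive relation r on 'I_n is the reachability relation of a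
   canonical graph: one cycle through each strongly connected class in
   increasing index order, plus edges between the least elements of the
   classes along the covering pairs of the order r induces on the classes.
   A charging argument shows that every graph whose reachability relation is
   r has at least as many edges, and the canonical graph is first-order
   definable from r, hence computable in polynomial time.
   If F is an (s, d)-TC spanner of G and E0 is the canonical graph of G, then
   F minus E0 is an (s, d)-shortcut of E0; the shortcut algorithm then yields
   an (aS s, aD d)-shortcut H of E0, and E0 together with H is a TC spanner of
   G with at most s + aS s edges and diameter at most aD d. *)

Lemma connect_sub_trans (T : finType) (e r : rel T) : transitive r -> subrel e r ->
  forall x y, connect e x y -> (x == y) || r x y.
Proof.
move=> r_tr e_r x y /connectP[p]; elim: p x => [|z p IH] x /=.
  by move=> _ ->; rewrite eqxx.
case/andP=> exz pz yE; have rxz := e_r _ _ exz.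
by case/orP: (IH z pz yE) => [/eqP <- | rzy]; rewrite ?rxz ?(r_tr _ _ _ rxz rzy) orbT.
Qed.

Lemma connect_crossing (T : finType) (e : rel T) (P : pred T) x y :
  connect e x y -> P x -> ~~ P y ->
  exists a b, [/\ e a b, P a, ~~ P b, connect e x a & connect e b y].
Proof.
case/connectP=> p + ->; elim: p x => [|z p IH] x /=; first by move=> _ ->.
case/andP=> exz pz Px nPy; have [Pz | nPz] := boolP (P z).
  have [a [b [eab Pa nPb cza cby]]] := IH z pz Pz nPy.
  by exists a, b; split=> //; apply: connect_trans (connect1 exz) cza.
by exists x, z; split=> //; apply/connectP; exists p.
Qed.

Lemma leq_card_witness (T T' : finType) (A : {set T}) (B : {set T'}) (w : T -> T' -> bool) :
  (forall x, x \in A -> exists2 y, y \in B & w x y) ->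
  (forall x x' y, x \in A -> x' \in A -> w x y -> w x' y -> x = x') ->
  (#|A| <= #|B|)%N.
Proof.
move=> wA w_inj; pose f x := [pick y in B | w x y].
have fP x : x \in A -> exists2 y, f x = Some y & (y \in B) && w x y.
  move=> Ax; rewrite /f; case: pickP => [y yP | none]; first by exists y.
  by have [y By wxy] := wA x Ax; have := none y; rewrite By wxy.
have f_inj : {in A &, injective f}.
  move=> x x' Ax Ax' fx; have [y fxy /andP[_ wxy]] := fP x Ax.
  have [y' fxy' /andP[_ wxy']] := fP x' Ax'.
  by apply: (w_inj x x' y) => //; move: fxy'; rewrite -fx fxy => -[->].
rewrite -(card_in_imset f_inj) -(card_imset B (@Some_inj _)).
apply/subset_leq_card/subsetP=> _ /imsetP[x Ax ->].
by have [y -> /andP[By _]] := fP x Ax; apply: imset_f.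
Qed.

Section Reachability.
Variables (n : nat) (E : edges n).

Lemma erel_reach1 : subrel (erel E) (reach1 E).
Proof. by move=> u v Euv; apply/existsP; exists v; rewrite Euv connect0. Qed.

Lemma reach1_connect u v : reach1 E u v -> connect (erel E) u v.
Proof. by case/existsP=> w /andP[Euw cwv]; apply: connect_trans (connect1 Euw) cwv. Qed.

Lemma reach1_connect_trans u w v :
  reach1 E u w -> connect (erel E) w v -> reach1 E u v.
Proof.
case/existsP=> x /andP[Eux cxw] cwv; apply/existsP; exists x.
by rewrite Eux (connect_trans cxw cwv).
Qed.

Lemma reach1_trans : transitive (reach1 E).
Proof. by move=> w u v ruw /reach1_connect; apply: reach1_connect_trans. Qed.

Lemma connect_neq_reach1 u v : connect (erel E) u v -> u != v -> reach1 E u v.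
Proof.
case/connectP=> [[|w p]] /=; first by move=> _ ->; rewrite eqxx.
by case/andP=> Euw pw vE _; apply/existsP; exists w; rewrite Euw; apply/connectP; exists p.
Qed.

Lemma connect_reach1_trans u w v :
  connect (erel E) u w -> reach1 E w v -> reach1 E u v.
Proof.
have [-> // | neq_uw cuw] := eqVneq u w.
exact/reach1_trans/(connect_neq_reach1 cuw).
Qed.

Lemma reach1_sub_trans (r : rel 'I_n) : transitive r -> subrel (erel E) r ->
  subrel (reach1 E) r.
Proof.
move=> r_tr E_r u v /existsP[w /andP[Euw cwv]]; have ruw := E_r _ _ Euw.
by case/orP: (connect_sub_trans r_tr E_r cwv) => [/eqP <- // | /(r_tr _ _ _ ruw)].
Qed.

End Reachability.

Lemma sub_tclosure n (E : edges n) : E \subset tclosure E.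
Proof. by apply/subsetP=> -[u v] Euv; rewrite inE erel_reach1. Qed.

Lemma connect_sub_tclosure n (F E : edges n) : F \subset tclosure E ->
  subrel (connect (erel F)) (connect (erel E)).
Proof. by move/subsetP=> FE; apply: connect_sub => u v /FE; rewrite inE => /reach1_connect. Qed.

Lemma tclosure_sub n (F E : edges n) : F \subset tclosure E -> tclosure F \subset tclosure E.
Proof.
move/subsetP=> FE; have F_E : subrel (erel F) (reach1 E) by move=> u v /FE; rewrite inE.
by apply/subsetP=> -[u v]; rewrite !inE; apply: reach1_sub_trans (@reach1_trans _ E) F_E _ _.
Qed.

Lemma tclosureS n (F E : edges n) : F \subset E -> tclosure F \subset tclosure E.
Proof. by move=> FE; apply/tclosure_sub/(subset_trans FE)/sub_tclosure. Qed.

Lemma eq_tclosure_reach1 n (F E : edges n) : tclosure F = tclosure E -> reach1 F =2 reach1 E.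
Proof. by move=> FE u v; have := congr1 (fun S : edges n => (u, v) \in S) FE; rewrite !inE. Qed.

Section CanonicalGraph.
Variables (n : nat) (r : rel 'I_n).

Definition sconn u v := r u v && r v u.

Definition scc_rep u := ~~ [exists w, sconn u w && (w < u)%N].

Definition cycle_edge u v :=
  sconn u v &&
  (((u < v)%N && ~~ [exists w, sconn u w && (u < w)%N && (w < v)%N])
   || (~~ [exists w, sconn u w && (u < w)%N] && ~~ [exists w, sconn u w && (w < v)%N])).

Definition cover_edge u v :=
  [&& scc_rep u, scc_rep v, r u v, ~~ r v u &
      ~~ [exists w, r u w && r w v && ~~ r w u && ~~ r v w]].

Definition canon_edge u v := cycle_edge u v || cover_edge u v.

Definition canon_graph : edges n := [set p | canon_edge p.1 p.2].

(* [sconn u u] fails when [u] lies on no cycle, hence the explicit equality. *)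
Definition same_scc u v := (u == v) || sconn u v.

Definition interval a b := [set z | ((a == z) || r a z) && ((z == b) || r z b)].

Lemma erel_canon u v : erel canon_graph u v = canon_edge u v.
Proof. by rewrite /erel inE. Qed.

Lemma canon_edge_rel : subrel canon_edge r.
Proof. by move=> u v /orP[/andP[/andP[]] | /and5P[]]. Qed.

Lemma sconnC u v : sconn u v = sconn v u.
Proof. by rewrite /sconn andbC. Qed.

Lemma same_sccC u v : same_scc u v = same_scc v u.
Proof. by rewrite /same_scc eq_sym sconnC. Qed.

Lemma same_scc_refl u : same_scc u u.
Proof. by rewrite /same_scc eqxx. Qed.

Hypothesis r_trans : transitive r.

Lemma sconn_trans u w v : sconn u w -> sconn w v -> sconn u v.
Proof.
case/andP=> ruw rwu /andP[rwv rvw].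
by rewrite /sconn (r_trans ruw rwv) (r_trans rvw rwu).
Qed.

Lemma sconn_refl u v : sconn u v -> sconn u u.
Proof. by move=> suv; rewrite (sconn_trans suv) // sconnC. Qed.

Lemma same_scc_trans u w v : same_scc u w -> same_scc w v -> same_scc u v.
Proof.
case/orP=> [/eqP -> // | suw] /orP[/eqP <- | swv]; first by rewrite /same_scc suw orbT.
by rewrite /same_scc (sconn_trans suw swv) orbT.
Qed.

Lemma same_scc_relL u v x : same_scc u v -> r u x = r v x.
Proof.
case/orP=> [/eqP -> // | /andP[ruv rvu]].
by apply/idP/idP=> rx; [apply: r_trans rvu rx | apply: r_trans ruv rx].
Qed.

Lemma same_scc_relR u v x : same_scc u v -> r x u = r x v.
Proof.
case/orP=> [/eqP -> // | /andP[ruv rvu]].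
by apply/idP/idP=> rx; [apply: r_trans rx ruv | apply: r_trans rx rvu].
Qed.

Lemma exists_scc_rep u : exists2 c, same_scc u c & scc_rep c.
Proof.
have [w suw | no_scc] := pickP (sconn u); last first.
  by exists u; rewrite ?same_scc_refl //; apply/existsPn=> w; rewrite no_scc.
have [c suc min_c] := @arg_minnP _ w (sconn u) val suw.
exists c; first by rewrite /same_scc suc orbT.
apply/existsPn=> w'; apply/negP=> /andP[scw' ltw'c].
by have := min_c w' (sconn_trans suc scw'); rewrite leqNgt ltw'c.
Qed.

Lemma scc_rep_uniq u v : same_scc u v -> scc_rep u -> scc_rep v -> u = v.
Proof.
case/orP=> [/eqP // | suv] /existsPn/(_ v) rep_u /existsPn/(_ u) rep_v.
rewrite suv -leqNgt in rep_u; rewrite sconnC suv -leqNgt in rep_v.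
by apply/val_inj/eqP; rewrite eqn_leq rep_u rep_v.
Qed.

Lemma cycle_edge_succ x y : sconn x y -> (x < y)%N ->
  exists2 m, cycle_edge x m & (x < m <= y)%N.
Proof.
move=> sxy ltxy; have Py : sconn x y && (x < y)%N by rewrite sxy ltxy.
have [m /andP[sxm ltxm] min_m] :=
  @arg_minnP _ y (fun z => sconn x z && (x < z)%N) val Py.
exists m; last by rewrite ltxm min_m.
rewrite /cycle_edge sxm ltxm /=; apply/orP; left.
apply/existsPn=> z; apply/negP=> /andP[/andP[sxz ltxz] ltzm].
by have := min_m z; rewrite sxz ltxz leqNgt ltzm => /(_ isT).
Qed.

Lemma sconn_connect_canon x y : sconn x y -> (x <= y)%N ->
  connect (erel canon_graph) x y.
Proof.
move=> sxy; have [k] := ubnP (y - x); elim: k x sxy => // k IH x sxy ltk.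
rewrite leq_eqVlt => /orP[/eqP/val_inj -> | ltxy]; first exact: connect0.
have [m cxm /andP[ltxm lemy]] := cycle_edge_succ sxy ltxy.
apply: connect_trans (connect1 _) (IH m _ _ lemy); first by rewrite erel_canon /canon_edge cxm.
  by have /andP[sxm _] := cxm; apply: sconn_trans sxy; rewrite sconnC.
by lia.
Qed.

Lemma sconn_reach1_canon x y : sconn x y -> reach1 canon_graph x y.
Proof.
move=> sxy; have sxx := sconn_refl sxy.
have [M sxM max_M] := @arg_maxnP _ x (sconn x) val sxx.
have [m sxm min_m] := @arg_minnP _ x (sconn x) val sxx.
have cMm : cycle_edge M m.
  rewrite /cycle_edge (sconn_trans _ sxm) 1?sconnC //=; apply/orP; right.
  apply/andP; split; apply/existsPn=> z; apply/negP=> /andP[sMz ltz];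
    have sxz := sconn_trans sxM sMz.
    by have := max_M z sxz; rewrite /= leqNgt ltz.
  by have := min_m z sxz; rewrite leqNgt ltz.
apply: connect_reach1_trans (sconn_connect_canon sxM (max_M x sxx)) _.
apply: reach1_connect_trans (sconn_connect_canon _ (min_m y sxy)).
  by apply: erel_reach1; rewrite erel_canon /canon_edge cMm.
by apply: sconn_trans sxy; rewrite sconnC.
Qed.

Lemma connect_same_scc u v : same_scc u v -> connect (erel canon_graph) u v.
Proof.
by case/orP=> [/eqP -> | suv]; [exact: connect0 | exact/reach1_connect/sconn_reach1_canon].
Qed.

Lemma interval_sub a b a' b' : (a == a') || r a a' -> (b' == b) || r b' b ->
  interval a' b' \subset interval a b.
Proof.
move=> aa' b'b; apply/subsetP=> z; rewrite !inE => /andP[a'z zb'].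
apply/andP; split.
  case/orP: aa' => [/eqP -> // | raa']; case/orP: a'z => [/eqP <- | ra'z].
    by rewrite raa' orbT.
  by rewrite (r_trans raa' ra'z) orbT.
case/orP: b'b => [/eqP <- // | rb'b]; case/orP: zb' => [/eqP -> | rzb'].
  by rewrite rb'b orbT.
by rewrite (r_trans rzb' rb'b) orbT.
Qed.

Lemma interval_properL a w b : r a w -> r w b -> ~~ r b w ->
  interval a w \proper interval a b.
Proof.
move=> raw rwb nrbw; apply/properP; split.
  by apply: interval_sub; rewrite ?eqxx ?rwb ?orbT.
exists b; first by rewrite inE (r_trans raw rwb) eqxx !orbT.
have nbw : b != w by apply: contraNneq nrbw => bw; move: rwb; rewrite bw.
by rewrite inE (negbTE nrbw) (negbTE nbw) andbF.
Qed.

Lemma interval_properR a w b : r a w -> r w b -> ~~ r w a ->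
  interval w b \proper interval a b.
Proof.
move=> raw rwb nrwa; apply/properP; split.
  by apply: interval_sub; rewrite ?eqxx ?raw ?orbT.
exists a; first by rewrite inE (r_trans raw rwb) eqxx !orbT.
have naw : a != w by apply: contraNneq nrwa => aw; move: raw; rewrite aw.
by rewrite inE (negbTE nrwa) eq_sym (negbTE naw).
Qed.

(* Induction on the size of the interval between [a] and [b]: after moving to
   the class representatives, either no class lies strictly between them and
   they are joined by a cover edge, or such a class splits the interval. *)
Lemma connect_canon_strict a b : r a b -> ~~ r b a -> connect (erel canon_graph) a b.
Proof.
have [N] := ubnP #|interval a b|; elim: N a b => // N IH a b ltN rab nrba.
have [a' saa' rep_a'] := exists_scc_rep a; have [b' sbb' rep_b'] := exists_scc_rep b.
have sb'b : same_scc b' b by rewrite same_sccC.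
apply: connect_trans (connect_same_scc saa') (connect_trans _ (connect_same_scc sb'b)).
have ra'b' : r a' b' by rewrite -(same_scc_relL _ saa') -(same_scc_relR _ sbb').
have nrb'a' : ~~ r b' a' by rewrite -(same_scc_relL _ sbb') -(same_scc_relR _ saa').
have aa' : (a == a') || r a a' by case/orP: saa' => [-> // | /andP[-> _]]; rewrite orbT.
have b'b : (b' == b) || r b' b by case/orP: sb'b => [-> // | /andP[-> _]]; rewrite orbT.
have le_N : (#|interval a' b'| <= N)%N.
  exact: leq_trans (subset_leq_card (interval_sub aa' b'b)) ltN.
have [/existsP[w /andP[/andP[/andP[ra'w rwb'] nrwa'] nrb'w]] | no_mid] :=
  boolP [exists w, r a' w && r w b' && ~~ r w a' && ~~ r b' w].
  apply: connect_trans (IH a' w _ _ _) (IH w b' _ _ _) => //.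
    exact: leq_trans (proper_card (interval_properL ra'w rwb' nrb'w)) le_N.
  exact: leq_trans (proper_card (interval_properR ra'w rwb' nrwa')) le_N.
apply: connect1; rewrite erel_canon /canon_edge /cover_edge.
by rewrite rep_a' rep_b' ra'b' nrb'a' no_mid orbT.
Qed.

Lemma reach1_canon u v : reach1 canon_graph u v = r u v.
Proof.
apply/idP/idP.
  by apply: reach1_sub_trans r_trans _ u v => x y; rewrite erel_canon => /canon_edge_rel.
move=> ruv; have [rvu | nrvu] := boolP (r v u).
  by apply: sconn_reach1_canon; rewrite /sconn ruv rvu.
apply: connect_neq_reach1 (connect_canon_strict ruv nrvu) _.
by apply: contraNneq nrvu => uv; move: ruv; rewrite uv.
Qed.

(* [q] pays for the canonical edge [p]: a cycle edge is paid by an edge leaving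
   its tail inside its class, a cover edge by an edge from its tail's class into
   its head's class. *)
Definition charges (p q : 'I_n * 'I_n) :=
  if sconn p.1 p.2 then (q.1 == p.1) && sconn q.1 q.2
  else [&& same_scc p.1 q.1, same_scc p.2 q.2 & ~~ r q.2 q.1].

Lemma cycle_edge_functional u v v' : cycle_edge u v -> cycle_edge u v' -> v = v'.
Proof.
suff nlt x y : cycle_edge u x -> cycle_edge u y -> ~~ (x < y)%N.
  move=> cv cv'; apply/val_inj/eqP.
  by rewrite eqn_leq leqNgt (nlt _ _ cv' cv) leqNgt (nlt _ _ cv cv').
case/andP=> sux cx /andP[suy cy]; apply/negP=> ltxy.
case/orP: cy => [/andP[ltuy /existsPn no_mid] | /andP[_ /existsPn/(_ x)]].
  case/orP: cx => [/andP[ltux _] | /andP[/existsPn/(_ y) no_gt _]].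
    by have := no_mid x; rewrite sux ltux ltxy.
  by rewrite suy ltuy in no_gt.
by rewrite sux ltxy.
Qed.

Lemma canon_edge_sconn u v : sconn u v -> canon_edge u v -> cycle_edge u v.
Proof. by case/andP=> _ rvu /orP[// | /and5P[_ _ _]]; rewrite rvu. Qed.

Lemma canon_edge_nsconn u v : ~~ sconn u v -> canon_edge u v -> cover_edge u v.
Proof. by move=> nsuv /orP[/andP[suv _] | //]; rewrite suv in nsuv. Qed.

Lemma charges_inj p p' q : p \in canon_graph -> p' \in canon_graph ->
  charges p q -> charges p' q -> p = p'.
Proof.
case: p p' => [u v] [u' v']; rewrite !inE /charges /= => cuv cu'v'.
have [suv | nsuv] := boolP (sconn u v); have [su'v' | nsu'v'] := boolP (sconn u' v').
- move=> /andP[/eqP qu _] /andP[/eqP qu' _]; have uu' : u = u' by rewrite -qu -qu'.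
  rewrite -uu' in cu'v' su'v' *.
  by rewrite (cycle_edge_functional (canon_edge_sconn suv cuv) (canon_edge_sconn su'v' cu'v')).
- by move=> /andP[_ /andP[_ ->]] /and3P[].
- by move=> /and3P[_ _ /negPf rq] /andP[_ /andP[_]]; rewrite rq.
have /and5P[rep_u rep_v _ _ _] := canon_edge_nsconn nsuv cuv.
have /and5P[rep_u' rep_v' _ _ _] := canon_edge_nsconn nsu'v' cu'v'.
move=> /and3P[su sv _] /and3P[su' sv' _]; rewrite same_sccC in su'; rewrite same_sccC in sv'.
by rewrite (scc_rep_uniq (same_scc_trans su su') rep_u rep_u')
           (scc_rep_uniq (same_scc_trans sv sv') rep_v rep_v').
Qed.

Section Charging.
Variable F : edges n.
Hypothesis reach1_F : reach1 F =2 r.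

Lemma charged_sconn u v : sconn u v -> exists2 q, q \in F & charges (u, v) q.
Proof.
move=> suv; have /andP[ruv rvu] := suv; rewrite /charges /= suv.
move: ruv; rewrite -reach1_F => /existsP[w /andP[Fuw cwv]].
exists (u, w) => //=; rewrite eqxx /sconn -!reach1_F erel_reach1 //=.
by apply: connect_reach1_trans cwv _; rewrite reach1_F.
Qed.

(* An [F]-path from [u] to [v] leaves the class of [u] through some edge [(a, b)];
   since no class lies strictly between those of [u] and [v], [b] is in the class of [v]. *)
Lemma charged_cover u v : cover_edge u v -> exists2 q, q \in F & charges (u, v) q.
Proof.
case/and5P=> _ _ ruv nrvu no_mid.
have nsuv : ~~ sconn u v by rewrite /sconn (negbTE nrvu) andbF.
have nsame : ~~ same_scc u v.
  by rewrite /same_scc (negbTE nsuv) orbF; apply: contraNneq nrvu => uv; move: ruv; rewrite uv.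
have cuv : connect (erel F) u v by apply: reach1_connect; rewrite reach1_F.
have [a [b [Fab sua nsub cua cbv]]] :=
  @connect_crossing _ _ (same_scc u) _ _ cuv (same_scc_refl u) nsame.
exists (a, b) => //; rewrite /charges /= (negbTE nsuv) sua /=.
have rub : r u b by rewrite -reach1_F (connect_reach1_trans cua (erel_reach1 Fab)).
have nrbu : ~~ r b u by apply: contra nsub => rbu; rewrite /same_scc /sconn rub rbu orbT.
rewrite -(same_scc_relR _ sua) nrbu andbT.
have [-> | nbv] := eqVneq b v; first exact: same_scc_refl.
have rbv : r b v by rewrite -reach1_F connect_neq_reach1.
have /existsPn/(_ b) := no_mid; rewrite rub rbv nrbu /= negbK => rvb.
by rewrite /same_scc /sconn rvb rbv orbT.
Qed.

Lemma card_canon_graph : (#|canon_graph| <= #|F|)%N.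
Proof.
apply: (leq_card_witness (w := charges)); last exact: charges_inj.
case=> u v; rewrite inE /= => cuv.
have [suv | nsuv] := boolP (sconn u v); first exact: charged_sconn.
exact/charged_cover/canon_edge_nsconn.
Qed.

End Charging.

End CanonicalGraph.

Lemma tclosure_canon n (E : edges n) : tclosure (canon_graph (reach1 E)) = tclosure E.
Proof. by apply/setP=> -[u v]; rewrite !inE reach1_canon //; apply: reach1_trans. Qed.

Lemma card_canon_le n (E F : edges n) :
  tclosure F = tclosure E -> (#|canon_graph (reach1 E)| <= #|F|)%N.
Proof. by move=> FE; apply: card_canon_graph (@reach1_trans _ E) _ (eq_tclosure_reach1 FE). Qed.

Definition f_sconn i j := FAnd (FR i j) (FR j i).
Definition f_or a b := FNot (FAnd (FNot a) (FNot b)).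

(* The tail and head are the variables 0 and 1; under an [FEx] the bound
   vertex becomes 0 and they shift to 1 and 2. *)
Definition f_cycle_edge :=
  FAnd (f_sconn 0 1)
    (f_or (FAnd (FLt 0 1) (FNot (FEx (FAnd (FAnd (f_sconn 1 0) (FLt 1 0)) (FLt 0 2)))))
          (FAnd (FNot (FEx (FAnd (f_sconn 1 0) (FLt 1 0))))
                (FNot (FEx (FAnd (f_sconn 1 0) (FLt 0 2)))))).

Definition f_cover_edge :=
  FAnd (FAnd (FAnd (FAnd (FNot (FEx (FAnd (f_sconn 1 0) (FLt 0 1))))
                         (FNot (FEx (FAnd (f_sconn 2 0) (FLt 0 2)))))
                   (FR 0 1))
             (FNot (FR 1 0)))
       (FNot (FEx (FAnd (FAnd (FAnd (FR 1 0) (FR 0 2)) (FNot (FR 0 1))) (FNot (FR 2 0))))).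

Definition f_canon := f_or f_cycle_edge f_cover_edge.

Lemma fo_alg_canon I : fo_alg f_canon I = canon_graph (reach1 (Defs.inE I)).
Proof.
apply/setP=> -[u v]; rewrite !inE /= /atom2 /=.
rewrite /canon_edge /cycle_edge /cover_edge /scc_rep /sconn.
rewrite ?negb_and ?negb_or ?negbK ?andbA.
by congr (_ && _ || _ && _); rewrite -negb_or negbK.
Qed.

Lemma tcsp_shortcut (R : realType) n (E E0 F : edges n) (s d : R) :
  tclosure E0 = tclosure E -> is_tcsp E F s d -> is_sc E0 (F :\: E0) s d.
Proof.
move=> E0E [[FE FE'] card_F diam_F]; split.
- by apply/subsetP=> p /setDP[Fp nE0p]; rewrite inE nE0p E0E (subsetP FE).
- by apply: le_trans card_F; rewrite ler_nat subset_leq_card // subsetDl.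
have sub : E0 :|: F :\: E0 \subset tclosure F.
  apply/subsetP=> q /setUP[E0q | /setDP[Fq _]]; last exact: (subsetP (sub_tclosure F)).
  by rewrite FE' -E0E (subsetP (sub_tclosure E0)).
move=> u v /(connect_sub_tclosure sub)/diam_F[p [pp lp size_p]].
exists p; split=> //; apply: sub_path pp => x y.
by rewrite /erel in_setU in_setD => ->; rewrite andbT orbN.
Qed.

Lemma shortcut_union_tcsp (R : realType) n (E E0 H : edges n) (s d : R) :
  tclosure E0 = tclosure E -> is_sc E0 H s d -> is_tcsp E (E0 :|: H) (#|E0|%:R + s) d.
Proof.
move=> E0E [HE0 card_H diam]; have sub : E0 :|: H \subset tclosure E0.
  apply/subsetP=> q /setUP[E0q | Hq]; first exact: (subsetP (sub_tclosure E0)).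
  by have /setDP[] := subsetP HE0 q Hq.
split=> //; last first.
  by apply: le_trans (lerD (lexx _) card_H); rewrite -natrD ler_nat (leq_card_setU E0 H).
split; first by rewrite -E0E.
by apply/eqP; rewrite eqEsubset -E0E tclosure_sub //= tclosureS // subsetUl.
Qed.

Theorem lemma2p5 (R : realType) (aS aD : nat -> R) (Poly : alg -> Prop) :
  poly_closed Poly ->
  (exists A : alg, Poly A /\ solves_shortcut_approx aS aD A) ->
  exists B : alg, Poly B /\ solves_tcsp_approx (fun n => aS n + 1)%R aD B.
Proof.
case=> fo_poly comp_poly union_poly [A [polyA solA]].
exists (fun I => fo_alg f_canon I :|: A (Inst (fo_alg f_canon I) (ind I) (ins I))); split.
  by apply: union_poly; [exact: fo_poly | exact: comp_poly].
move=> I [F spanF] /=; rewrite fo_alg_canon.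
set E0 := canon_graph _; have E0E : tclosure E0 = tclosure (Defs.inE I) := tclosure_canon _.
have [[_ FE] card_F _] := spanF.
have card_E0 : ((#|E0|%:R : R) <= (ins I)%:R)%R.
  by apply: le_trans card_F; rewrite ler_nat (card_canon_le FE).
have := solA (Inst E0 (ind I) (ins I)) (ex_intro _ (F :\: E0) (tcsp_shortcut E0E spanF)).
case/(shortcut_union_tcsp E0E) => span_H card_H diam_H; split=> //.
by apply: le_trans card_H _; rewrite mulrDl mul1r addrC lerD.
Qed.
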